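(* There exist a common knowledge debate game, a common knowledge distinguishing debate game, and a private information distinguishing debate game each of which has the following property: the minimum error over all policies is strictly less than the minimum error over policies $M$ whose image is contained in $\{0,1\}$.
   Context: Let $\delta$ be a special default action. CKDG: a tuple $(A_1,A_2,S,P,C_1,C_2,u)$ consisting of finite sets $A_i\not\ni\delta$, a finite set $S$, a probability mass function $P$ on $S$, maps $C_i:S\to\mathcal P(A_i)$, and $u:\{1,2\}\times S\to\mathbb R$. A policy is $M:\{1,2\}\times(A_1\cup\{\delta\})\times(A_2\cup\{\delta\})\to[0,1]$ with $M(1,\cdot,\cdot)+M(2,\cdot,\cdot)=1$. $w^i_M(s)$ is the value to agent $i$ of the zero-sum game with payoff matrix $M(i,\cdot,\cdot)$, with agent 1 restricted to $C_1(s)\cup\{\delta\}$ and agent 2 to $C_2(s)\cup\{\delta\}$. The error is $\mathbb E_{s\sim P}[\,|u(1,s)-u(2,s)|w^1_M(s)$ if $u(1,s)\le u(2,s)$, else $|u(1,s)-u(2,s)|w^2_M(s)\,]$. CKDDG: a tuple $(A,S,P,C_w,C_l)$ with $A$ finite, $\delta\notin A$, $S$ finite, $P$ a probability mass function on $S$, and $C_w,C_l:S\to\mathcal P(A)$. Policies and error are those of the induced CKDG $(A,A,\{1,2\}\times S,P',C'_1,C'_2,u')$, where: - $P'((i,s))=P(s)/2$; - $C'_j((i,s))=C_w(s)$ if $i=j$, else $C_l(s)$; - $u'(j,(i,s))=[i=j]$. PIDDG: a tuple of the same form as a CKDDG. A policy is $M:\{1,2\}\times(A\cup\{\delta\})^2\to[0,1]$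 with $M(1,\cdot,\cdot)+M(2,\cdot,\cdot)=1$. $G_1(B,M)$ is the following Bayesian game. Each agent has action set $A\cup\{\delta\}$. A scenario $s\sim P$ is drawn, and agent 1's type (set of available non-default actions) is $C_w(s)$ while agent 2's is $C_l(s)$. Payoffs are as follows: - if both agents play available actions, agent $i$ gets $M(i,a_1,a_2)$; - if exactly one plays an unavailable action, it gets $0$ and the other gets $1$; - if both play unavailable actions, each gets $1/2$. $G_2(B,M)$ swaps the types. The PIDDG error is $\frac{v_1(G_2(B,M))+v_2(G_1(B,M))}{2}$, where $v_i$ is the value of the zero-sum Bayesian game to agent $i$. Minimum errors over the relevant (compact) policy sets exist. *)

From HB Require Import structures.
From mathcomp Require Import all_boot all_order all_algebra.
From mathcomp Require Import boolp classical_sets reals.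
Set Implicit Arguments.
Unset Strict Implicit.
Unset Printing Implicit Defensive.
Import Order.TTheory GRing.Theory Num.Theory.
Local Open Scope ring_scope.
Local Open Scope classical_set_scope.

Definition ag1 : 'I_2 := ord0.
Definition ag2 : 'I_2 := ord_max.

(* The default action delta is modelled by [None : option A]. *)
Definition avail (A : finType) (X : {set A}) (a : option A) : bool :=
  if a is Some x then x \in X else true.

Section Defs.
Variable R : realType.

Definition mixed (T : finType) (X : pred T) (x : T -> R) : Prop :=
  (forall t, 0 <= x t) /\ \sum_(t : T) x t = 1 /\ (forall t, ~~ X t -> x t = 0).

Definition payoff (T1 T2 : finType) (f : T1 -> T2 -> R) (x : T1 -> R) (y : T2 -> R) : R :=
  \sum_(a : T1) \sum_(b : T2) x a * y b * f a b.

Definition value1 (T1 T2 : finType) (f : T1 -> T2 -> R) (X : pred T1) (Y : pred T2) : R :=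
  sup [set v | exists x, mixed X x /\
        v = inf [set w | exists y, mixed Y y /\ w = payoff f x y]].

Definition value2 (T1 T2 : finType) (g : T1 -> T2 -> R) (X : pred T1) (Y : pred T2) : R :=
  sup [set v | exists y, mixed Y y /\
        v = inf [set w | exists x, mixed X x /\ w = payoff g x y]].

Definition is_policy (A1 A2 : finType) (M : 'I_2 -> option A1 -> option A2 -> R) : Prop :=
  (forall i a b, 0 <= M i a b <= 1) /\ (forall a b, M ag1 a b + M ag2 a b = 1).

Definition is_det_policy (A1 A2 : finType) (M : 'I_2 -> option A1 -> option A2 -> R) : Prop :=
  is_policy M /\ (forall i a b, M i a b = 0 \/ M i a b = 1).

Definition randomization_helps (A1 A2 : finType)
    (err : ('I_2 -> option A1 -> option A2 -> R) -> R) : Prop :=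
  exists M, is_policy M /\ forall M', is_det_policy M' -> err M < err M'.

Definition is_pmf (S : finType) (P : S -> R) : Prop :=
  (forall s, 0 <= P s) /\ \sum_(s : S) P s = 1.

Unset Implicit Arguments.
Record CKDG := mkCKDG {
  ck_A1 : finType; ck_A2 : finType; ck_S : finType;
  ck_P : ck_S -> R;
  ck_C1 : ck_S -> {set ck_A1};
  ck_C2 : ck_S -> {set ck_A2};
  ck_u : 'I_2 -> ck_S -> R }.

Set Implicit Arguments.
Definition ckdg_wf (G : CKDG) : Prop := is_pmf (ck_P G).

Definition ck_w (G : CKDG) (M : 'I_2 -> option (ck_A1 G) -> option (ck_A2 G) -> R)
    (i : 'I_2) (s : ck_S G) : R :=
  let X := avail (ck_C1 G s) in
  let Y := avail (ck_C2 G s) in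
  if i == ag1 then value1 (M ag1) X Y else value2 (M ag2) X Y.

Definition ckdg_error (G : CKDG) (M : 'I_2 -> option (ck_A1 G) -> option (ck_A2 G) -> R) : R :=
  \sum_(s : ck_S G) ck_P G s *
    (if ck_u G ag1 s <= ck_u G ag2 s
     then `|ck_u G ag1 s - ck_u G ag2 s| * ck_w M ag1 s
     else `|ck_u G ag1 s - ck_u G ag2 s| * ck_w M ag2 s).

Unset Implicit Arguments.
Record DDG := mkDDG {
  dd_A : finType; dd_S : finType;
  dd_P : dd_S -> R;
  dd_Cw : dd_S -> {set dd_A};
  dd_Cl : dd_S -> {set dd_A} }.

Set Implicit Arguments.
Definition ddg_wf (G : DDG) : Prop := is_pmf (dd_P G).

Definition induced_ckdg (G : DDG) : CKDG :=
  {| ck_A1 := dd_A G; ck_A2 := dd_A G;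
     ck_S := ('I_2 * dd_S G)%type;
     ck_P := fun p => dd_P G p.2 / 2;
     ck_C1 := fun p => if p.1 == ag1 then dd_Cw G p.2 else dd_Cl G p.2;
     ck_C2 := fun p => if p.1 == ag2 then dd_Cw G p.2 else dd_Cl G p.2;
     ck_u := fun j p => if p.1 == j then 1 else 0 |}.

Definition ckddg_error (G : DDG) (M : 'I_2 -> option (dd_A G) -> option (dd_A G) -> R) : R :=
  ckdg_error (G := induced_ckdg G) M.

(* Payoff to agent i in the Bayesian game when agent 1 has type T1 and
   agent 2 has type T2 and they play a1, a2. *)
Definition bpay (A : finType) (M : 'I_2 -> option A -> option A -> R) (i : 'I_2)
    (T1 T2 : {set A}) (a1 a2 : option A) : R :=
  match avail T1 a1, avail T2 a2 with
  | true, true => M i a1 a2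
  | true, false => if i == ag1 then 1 else 0
  | false, true => if i == ag1 then 0 else 1
  | false, false => 1 / 2
  end.

(* Behavioural strategies: a mixed action (over all of A + delta) for each type. *)
Definition bstrat (A : finType) (sigma : {set A} -> option A -> R) : Prop :=
  forall T, mixed predT (sigma T).

Definition bexp (G : DDG) (M : 'I_2 -> option (dd_A G) -> option (dd_A G) -> R) (i : 'I_2)
    (t1 t2 : dd_S G -> {set dd_A G}) (s1 s2 : {set dd_A G} -> option (dd_A G) -> R) : R :=
  \sum_(s : dd_S G) dd_P G s *
    \sum_(a : option (dd_A G)) \sum_(b : option (dd_A G))
      s1 (t1 s) a * s2 (t2 s) b * bpay M i (t1 s) (t2 s) a b.

Definition bvalue1 (G : DDG) (M : 'I_2 -> option (dd_A G) -> option (dd_A G) -> R)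
    (t1 t2 : dd_S G -> {set dd_A G}) : R :=
  sup [set v | exists s1, bstrat s1 /\
        v = inf [set w | exists s2, bstrat s2 /\ w = bexp M ag1 t1 t2 s1 s2]].

Definition bvalue2 (G : DDG) (M : 'I_2 -> option (dd_A G) -> option (dd_A G) -> R)
    (t1 t2 : dd_S G -> {set dd_A G}) : R :=
  sup [set v | exists s2, bstrat s2 /\
        v = inf [set w | exists s1, bstrat s1 /\ w = bexp M ag2 t1 t2 s1 s2]].

(* G_1(B,M): agent 1 has type C_w(s), agent 2 has type C_l(s); G_2 swaps. *)
Definition piddg_error (G : DDG) (M : 'I_2 -> option (dd_A G) -> option (dd_A G) -> R) : R :=
  (bvalue1 M (dd_Cl G) (dd_Cw G) + bvalue2 M (dd_Cw G) (dd_Cl G)) / 2.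

End Defs.

From mathcomp Require Import all_boot all_order all_algebra.
From mathcomp Require Import boolp classical_sets reals.
From mathcomp Require Import lra.
Set Implicit Arguments.
Unset Strict Implicit.
Unset Printing Implicit Defensive.
Import Order.TTheory GRing.Theory Num.Theory.
Local Open Scope ring_scope.

(* One distinguishing debate game serves for all three claims (the CKDG is the
   one it induces): actions {true, false}, three scenarios of probabilities
   2/5, 1/5, 2/5, and types that reveal the scenario.  Both the CKDDG and the
   PIDDG error measure what the debater holding C_l can get; since the types
   reveal the scenario, per-scenario strategies of the winner bound them above
   and per-scenario strategies of the loser bound them below.
   Against the randomized judge [ex_policy] the winner holds the error to 29/60.
   A deterministic judge is a zero-one matrix; mixing two available actions
   half-half, the loser secures half the best column-wise score of a pair of
   rows, and an exhaustive check of the 2^9 matrices shows that this forces an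
   error of at least 1/2. *)

Section MaxMin.
Variables (R : realType) (X Y : Type) (Sx : X -> Prop) (Sy : Y -> Prop) (F : X -> Y -> R).

Definition maxmin : R :=
  sup [set v | exists x, Sx x /\ v = inf [set w | exists y, Sy y /\ w = F x y]]%classic.

Hypothesis F01 : forall x y, Sx x -> Sy y -> 0 <= F x y <= 1.

Let inf_le x y : Sx x -> Sy y -> inf [set w | exists y, Sy y /\ w = F x y]%classic <= F x y.
Proof.
move=> Sxx Syy; apply: ge_inf; last by exists y.
by exists 0 => _ [y' [Syy' ->]]; case/andP: (F01 Sxx Syy').
Qed.

Lemma maxmin_ge x0 t : Sx x0 -> (exists y, Sy y) ->
  (forall y, Sy y -> t <= F x0 y) -> t <= maxmin.
Proof.
move=> Sx0 [y0 Sy0] Ht; apply: le_trans (ub_le_sup _ _); last by exists x0.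
  by apply: lb_le_inf => [|_ [y [Syy ->]]]; [exists (F x0 y0), y0 | exact: Ht].
exists 1 => _ [x [Sxx ->]]; apply: le_trans (inf_le Sxx Sy0) _.
by case/andP: (F01 Sxx Sy0).
Qed.

Lemma maxmin_le y0 t : (exists x, Sx x) -> Sy y0 ->
  (forall x, Sx x -> F x y0 <= t) -> maxmin <= t.
Proof.
move=> [x0 Sx0] Sy0 Ht; apply: ge_sup => [|_ [x [Sxx ->]]].
  by exists (inf [set w | exists y, Sy y /\ w = F x0 y]%classic), x0.
exact: le_trans (inf_le Sxx Sy0) (Ht x Sxx).
Qed.

End MaxMin.

Section MixedStrategies.
Variables (R : realType) (T : finType).
Implicit Types (X : pred T) (x h : T -> R).

Lemma mixed_predT X x : mixed X x -> mixed predT x.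
Proof. by case=> x0 [x1 _]. Qed.

Lemma mixed_avg_ge X x h t : mixed X x -> (forall k, X k -> t <= h k) ->
  t <= \sum_k x k * h k.
Proof.
move=> [x0 [x1 xX]] Ht; rewrite -[t]mul1r -x1 mulr_suml; apply: ler_sum => k _.
by case Xk: (X k); [rewrite ler_wpM2l ?Ht | rewrite xX ?Xk // !mul0r].
Qed.

Lemma mixed_avg_le X x h t : mixed X x -> (forall k, X k -> h k <= t) ->
  \sum_k x k * h k <= t.
Proof.
move=> [x0 [x1 xX]] Ht; rewrite -[t]mul1r -x1 mulr_suml; apply: ler_sum => k _.
by case Xk: (X k); [rewrite ler_wpM2l ?Ht | rewrite xX ?Xk // !mul0r].
Qed.

Lemma eq_mixed_sum X x h h' : mixed X x -> (forall k, X k -> h k = h' k) ->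
  \sum_k x k * h k = \sum_k x k * h' k.
Proof.
move=> [_ [_ xX]] hh'; apply: eq_bigr => k _.
by case Xk: (X k); [rewrite hh' | rewrite xX ?Xk // !mul0r].
Qed.

Definition pure (a : T) : T -> R := fun t => (t == a)%:R.

Lemma sum_pure a h : \sum_t pure a t * h t = h a.
Proof.
rewrite (bigD1 a) //= /pure eqxx mul1r big1 ?addr0 // => t /negbTE ->.
by rewrite mul0r.
Qed.

Lemma pure_mixed X a : X a -> mixed X (pure a).
Proof.
move=> Xa; split; first by move=> t; rewrite ler0n.
split; first by have := sum_pure a (fun=> 1); under eq_bigr do rewrite mulr1.
by move=> t Xt; rewrite /pure; case: eqP Xt => // ->; rewrite Xa.
Qed.

Definition mix2 (p : R) (a1 a2 : T) : T -> R :=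
  fun t => p * pure a1 t + (1 - p) * pure a2 t.

Lemma sum_mix2 p a1 a2 h : \sum_t mix2 p a1 a2 t * h t = p * h a1 + (1 - p) * h a2.
Proof.
under eq_bigr do rewrite mulrDl -!mulrA.
by rewrite big_split /= -!mulr_sumr !sum_pure.
Qed.

Lemma mix2_mixed X p a1 a2 : 0 <= p <= 1 -> X a1 -> X a2 -> mixed X (mix2 p a1 a2).
Proof.
move=> /andP[p0 p1] /(@pure_mixed X) [a10 [a11 a1X]] /(@pure_mixed X) [a20 [a21 a2X]].
split; [|split].
- by move=> t; rewrite addr_ge0 // mulr_ge0 ?subr_ge0.
- by rewrite big_split /= -!mulr_sumr a11 a21 !mulr1 addrC subrK.
- by move=> t Xt; rewrite /mix2 a1X // a2X // !mulr0 addr0.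
Qed.

End MixedStrategies.

Section MatrixGames.
Variables (R : realType) (T1 T2 : finType).
Implicit Types (f : T1 -> T2 -> R) (X : pred T1) (Y : pred T2).

Lemma payoff_rows f x y : payoff f x y = \sum_a x a * \sum_b y b * f a b.
Proof.
by apply: eq_bigr => a _; rewrite mulr_sumr; apply: eq_bigr => b _; rewrite mulrA.
Qed.

Lemma payoff_cols f x y : payoff f x y = \sum_b y b * \sum_a x a * f a b.
Proof.
rewrite /payoff exchange_big; apply: eq_bigr => b _; rewrite mulr_sumr.
by apply: eq_bigr => a _; rewrite mulrCA mulrA.
Qed.

Lemma payoff01 f X Y x y : (forall a b, 0 <= f a b <= 1) ->
  mixed X x -> mixed Y y -> 0 <= payoff f x y <= 1.
Proof.
move=> f01 Xx Yy; rewrite payoff_rows; apply/andP; split.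
  by apply: (mixed_avg_ge Xx) => a _; apply: (mixed_avg_ge Yy) => b _; case/andP: (f01 a b).
by apply: (mixed_avg_le Xx) => a _; apply: (mixed_avg_le Yy) => b _; case/andP: (f01 a b).
Qed.

Definition secures f X Y x v : Prop :=
  mixed X x /\ forall b, Y b -> v <= \sum_a x a * f a b.

Definition caps f X Y y v : Prop :=
  mixed Y y /\ forall a, X a -> \sum_b y b * f a b <= v.

Lemma value1_ge f X Y x v b0 : (forall a b, 0 <= f a b <= 1) -> Y b0 ->
  secures f X Y x v -> v <= value1 f X Y.
Proof.
move=> f01 Yb0 [Xx xv].
apply: (@maxmin_ge _ _ _ (mixed X) (mixed Y) (payoff f) _ x) => //.
- by move=> x' y' Xx' Yy'; apply: payoff01 Xx' Yy'.
- by exists (pure R b0); apply: pure_mixed.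
- by move=> y Yy; rewrite payoff_cols; apply: (mixed_avg_ge Yy).
Qed.

Lemma value1_le f X Y y v a0 : (forall a b, 0 <= f a b <= 1) -> X a0 ->
  caps f X Y y v -> value1 f X Y <= v.
Proof.
move=> f01 Xa0 [Yy yv].
apply: (@maxmin_le _ _ _ (mixed X) (mixed Y) (payoff f) _ y) => //.
- by move=> x' y' Xx' Yy'; apply: payoff01 Xx' Yy'.
- by exists (pure R a0); apply: pure_mixed.
- by move=> x Xx; rewrite payoff_rows; apply: (mixed_avg_le Xx).
Qed.

End MatrixGames.

Lemma value2_value1 (R : realType) (T1 T2 : finType) (f : T1 -> T2 -> R) X Y :
  value2 f X Y = value1 (fun b a => f a b) Y X.
Proof.
have E x y : payoff f x y = payoff (fun b a => f a b) y x.
  by rewrite payoff_cols payoff_rows.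
rewrite /value2 /value1; congr sup; apply/seteqP; split=> _ [y [Yy ->]];
  exists y; split=> //; congr inf; apply/seteqP; split=> _ [x [Xx ->]];
  by exists x; split.
Qed.

Section ZeroOneGames.
Variables (T1 T2 : finType) (B : T1 -> T2 -> bool).
Implicit Types (X : pred T1) (Y : pred T2).

(* No pair of rows wins more than twice, so 2 is neutral for this minimum. *)
Definition guarantee Y (a1 a2 : T1) : nat :=
  \big[Order.min/2%N]_(c in Y) (B a1 c + B a2 c)%N.

Definition best_guarantee X Y : nat :=
  (\max_(a1 in X) \max_(a2 in X) guarantee Y a1 a2)%N.

Lemma best_guarantee_half_le1 (R : realType) X Y : (best_guarantee X Y)%:R / 2 <= 1 :> R.
Proof.
have : (best_guarantee X Y <= 2)%N.
  apply/bigmax_leqP => a1 _; apply/bigmax_leqP => a2 _.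
  by rewrite -leEnat; apply: bigmin_le_id.
rewrite -(ler_nat R); lra.
Qed.

Lemma secures_best_guarantee (R : realType) X Y a0 : X a0 ->
  exists x, secures (fun a b => (B a b)%:R : R) X Y x ((best_guarantee X Y)%:R / 2).
Proof.
rewrite /best_guarantee => Xa0; have X_gt0 : (0 < #|X|)%N by apply/card_gt0P; exists a0.
have [a1 Xa1 ->] := eq_bigmax_cond (fun a1 => \max_(a2 in X) guarantee Y a1 a2)%N X_gt0.
have [a2 Xa2 ->] := eq_bigmax_cond (guarantee Y a1) X_gt0.
exists (mix2 (1 / 2) a1 a2); split; first by apply: mix2_mixed => //; lra.
move=> c Yc; rewrite sum_mix2.
have : (guarantee Y a1 a2)%:R <= (B a1 c)%:R + (B a2 c)%:R :> R.
  by rewrite -natrD ler_nat -leEnat; apply: bigmin_le_cond.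
lra.
Qed.

End ZeroOneGames.

Section Policies.
Variables (R : realType) (A1 A2 : finType).
Implicit Types M : 'I_2 -> option A1 -> option A2 -> R.

Lemma det_policy_indicator M : is_det_policy M ->
  (forall a b, M ag1 a b = (M ag1 a b == 1)%:R) /\
  (forall a b, M ag2 a b = (M ag1 a b != 1)%:R).
Proof.
move=> [[_ M_sum] M01]; have /negbTE z1 : (0 : R) != 1 by rewrite eq_sym oner_neq0.
split=> a b; first by case: (M01 ag1 a b) => ->; rewrite ?eqxx ?z1.
rewrite -[M ag2 a b](addKr (M ag1 a b)) M_sum.
by case: (M01 ag1 a b) => ->; rewrite ?eqxx ?z1 /= ?oppr0 ?add0r ?addNr.
Qed.

Lemma randomization_helps_gap err M (lo hi : R) :
  is_policy M -> err M <= lo -> lo < hi ->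
  (forall M', is_det_policy M' -> hi <= err M') -> randomization_helps err.
Proof.
move=> M_pol err_lo lo_hi det_hi; exists M; split=> // M' M'_det.
exact: le_lt_trans err_lo (lt_le_trans lo_hi (det_hi M' M'_det)).
Qed.

Definition swap_agents M : 'I_2 -> option A2 -> option A1 -> R :=
  fun i b a => M (if i == ag1 then ag2 else ag1) a b.

Lemma swap_agents01 M : (forall i a b, 0 <= M i a b <= 1) ->
  forall b a, 0 <= swap_agents M ag1 b a <= 1.
Proof. by move=> M01 b a; apply: M01. Qed.

Lemma det_policy_secures M (X : pred (option A1)) (Y : pred (option A2)) :
  is_det_policy M -> X None ->
  exists x, secures (M ag1) X Y x
    ((best_guarantee (fun a b => M ag1 a b == 1) X Y)%:R / 2).
Proof.
move=> M_det XN; have [M1 _] := det_policy_indicator M_det.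
set B := fun a b => M ag1 a b == 1.
have -> : M ag1 = fun a b => (B a b)%:R by apply/funext => a; apply/funext.
exact: secures_best_guarantee XN.
Qed.

Lemma swap_agents_det M : is_det_policy M -> is_det_policy (swap_agents M).
Proof.
move=> [[M01 M_sum] M_bits]; split; last by move=> i b a; apply: M_bits.
split=> [i b a|b a]; first exact: M01.
by rewrite /swap_agents eqxx addrC; apply: M_sum.
Qed.

Lemma swap_agents_det_bits M : is_det_policy M ->
  forall a b, (swap_agents M ag1 b a == 1) = (M ag1 a b != 1).
Proof.
move=> /det_policy_indicator [_ M2] a b; rewrite /swap_agents eqxx M2.
by case: (M ag1 a b != 1); rewrite ?eqxx // eq_sym oner_eq0.
Qed.

End Policies.

Lemma sum_pair (R : realType) (I J : finType) (F : I * J -> R) :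
  \sum_p F p = \sum_i \sum_j F (i, j).
Proof. by rewrite pair_bigA; apply: eq_bigr => -[]. Qed.

Lemma ckddg_errorE (R : realType) (G : DDG R) M :
  ckddg_error M =
  (\sum_s dd_P R G s * value1 (M ag1) (avail (dd_Cl R G s)) (avail (dd_Cw R G s)) +
   \sum_s dd_P R G s *
     value1 (swap_agents M ag1) (avail (dd_Cl R G s)) (avail (dd_Cw R G s))) / 2.
Proof.
rewrite /ckddg_error /ckdg_error /= sum_pair big_ord_recl big_ord1 -big_split.
rewrite mulrDl !mulr_suml -big_split; apply: eq_bigr => s _ /=.
have -> : lift ord0 ord0 = ag2 by apply: val_inj.
rewrite ler10 ler01 subr0 sub0r normrN normr1 !mul1r /ck_w /= value2_value1.
by rewrite /swap_agents eqxx addrC; congr (_ + _); rewrite mulrAC.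
Qed.

Lemma induced_ckdg_wf (R : realType) (G : DDG R) : ddg_wf G -> ckdg_wf (induced_ckdg G).
Proof.
move=> [P0 P1]; split=> [p|]; first by rewrite /= divr_ge0.
rewrite /= sum_pair big_ord_recl big_ord1 -!mulr_suml P1; lra.
Qed.

Section BayesianGames.
Variables (R : realType) (G : DDG R).
Local Notation A := (dd_A R G).
Local Notation S := (dd_S R G).
Local Notation P := (dd_P R G).
Implicit Types (M : 'I_2 -> option A -> option A -> R) (t : S -> {set A}).

Lemma bpay_swap_agents M T1 T2 a b :
  bpay (swap_agents M) ag1 T2 T1 b a = bpay M ag2 T1 T2 a b.
Proof. by rewrite /bpay /swap_agents eqxx; case: (avail T1 a); case: (avail T2 b). Qed.

Lemma bvalue2_swap M t1 t2 : bvalue2 M t1 t2 = bvalue1 (swap_agents M) t2 t1.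
Proof.
have E s1 s2 : bexp M ag2 t1 t2 s1 s2 = bexp (swap_agents M) ag1 t2 t1 s2 s1.
  apply: eq_bigr => s _; rewrite exchange_big; congr (_ * _).
  apply: eq_bigr => b _; apply: eq_bigr => a _.
  by rewrite bpay_swap_agents [s2 _ _ * _]mulrC.
rewrite /bvalue2 /bvalue1; congr sup; apply/seteqP; split=> _ [s2 [H2 ->]];
  exists s2; split=> //; congr inf; apply/seteqP; split=> _ [s1 [H1 ->]];
  by exists s1; split.
Qed.

Lemma piddg_errorE M : piddg_error M =
  (bvalue1 M (dd_Cl R G) (dd_Cw R G) + bvalue1 (swap_agents M) (dd_Cl R G) (dd_Cw R G)) / 2.
Proof. by rewrite /piddg_error bvalue2_swap. Qed.

Lemma bexpE M i t1 t2 s1 s2 : bexp M i t1 t2 s1 s2 =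
  \sum_s P s * payoff (bpay M i (t1 s) (t2 s)) (s1 (t1 s)) (s2 (t2 s)).
Proof. by []. Qed.

Lemma bvalue1E M t1 t2 :
  bvalue1 M t1 t2 = maxmin (@bstrat R A) (@bstrat R A) (bexp M ag1 t1 t2).
Proof. by []. Qed.

Definition revealed_strategy (t : S -> {set A}) (x : S -> option A -> R) :
  {set A} -> option A -> R :=
  fun T => if [pick s | t s == T] is Some s then x s else pure R None.

Lemma revealed_strategyE t x s : injective t -> revealed_strategy t x (t s) = x s.
Proof.
move=> t_inj; rewrite /revealed_strategy.
by case: pickP => [s' /eqP/t_inj -> | /(_ s)]; rewrite ?eqxx.
Qed.

Lemma revealed_bstrat t x (X : S -> pred (option A)) :
  (forall s, mixed (X s) (x s)) -> bstrat (revealed_strategy t x).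
Proof.
move=> x_mixed T; rewrite /revealed_strategy; case: pickP => [s _|_].
  exact: mixed_predT (x_mixed s).
exact: pure_mixed.
Qed.

Hypothesis G_wf : ddg_wf G.
Variable M : 'I_2 -> option A -> option A -> R.
Hypothesis M01 : forall a b, 0 <= M ag1 a b <= 1.

Lemma bpay01 T1 T2 a b : 0 <= bpay M ag1 T1 T2 a b <= 1.
Proof.
rewrite /bpay; case: (avail T1 a); case: (avail T2 b) => //=; rewrite ?eqxx ?lexx ?ler01 //.
by apply/andP; split; lra.
Qed.

Lemma bexp01 t1 t2 s1 s2 : bstrat s1 -> bstrat s2 -> 0 <= bexp M ag1 t1 t2 s1 s2 <= 1.
Proof.
move: G_wf => [P0 P1] H1 H2; rewrite bexpE.
have pay01 s : 0 <= payoff (bpay M ag1 (t1 s) (t2 s)) (s1 (t1 s)) (s2 (t2 s)) <= 1.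
  by apply: payoff01 (H1 (t1 s)) (H2 (t2 s)) => a b; apply: bpay01.
apply/andP; split.
  by apply: sumr_ge0 => s _; rewrite mulr_ge0 //; case/andP: (pay01 s).
by rewrite -P1; apply: ler_sum => s _; rewrite ler_piMr //; case/andP: (pay01 s).
Qed.

Lemma bpay_rows T1 T2 x b : mixed (avail T1) x ->
  \sum_a x a * bpay M ag1 T1 T2 a b = if avail T2 b then \sum_a x a * M ag1 a b else 1.
Proof.
move=> x_mixed.
rewrite (eq_mixed_sum (h' := fun a => if avail T2 b then M ag1 a b else 1) x_mixed).
  by case: ifP => // _; under eq_bigr do rewrite mulr1; exact: x_mixed.2.1.
by move=> a T1a; rewrite /bpay T1a; case: ifP.
Qed.

Lemma bpay_cols T1 T2 y a : mixed (avail T2) y ->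
  \sum_b y b * bpay M ag1 T1 T2 a b = if avail T1 a then \sum_b y b * M ag1 a b else 0.
Proof.
move=> y_mixed.
rewrite (eq_mixed_sum (h' := fun b => if avail T1 a then M ag1 a b else 0) y_mixed).
  by case: ifP => // _; rewrite big1 // => b _; rewrite mulr0.
by move=> b T2b; rewrite /bpay T2b; case: ifP; rewrite ?eqxx.
Qed.

Lemma bvalue1_ge t1 t2 x v : injective t1 ->
  (forall s, secures (M ag1) (avail (t1 s)) (avail (t2 s)) (x s) (v s)) ->
  (forall s, v s <= 1) ->
  \sum_s P s * v s <= bvalue1 M t1 t2.
Proof.
move=> t1_inj x_secures v1.
have x_mixed s := (x_secures s).1.
rewrite bvalue1E; apply: (maxmin_ge _ (revealed_bstrat t1 x_mixed)).
- by move=> s1 s2; apply: bexp01.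
- by exists (fun _ => pure R None) => T; apply: pure_mixed.
move=> s2 s2_strat; rewrite bexpE; apply: ler_sum => s _.
rewrite ler_wpM2l //; first by case: G_wf.
rewrite revealed_strategyE // payoff_cols.
apply: (mixed_avg_ge (s2_strat (t2 s))) => b _; rewrite bpay_rows //.
by case: ifP => [T2b | _]; [apply: (x_secures s).2 | apply: v1].
Qed.

Lemma bvalue1_le t1 t2 y v : injective t2 ->
  (forall s, caps (M ag1) (avail (t1 s)) (avail (t2 s)) (y s) (v s)) ->
  (forall s, 0 <= v s) ->
  bvalue1 M t1 t2 <= \sum_s P s * v s.
Proof.
move=> t2_inj y_caps v0.
have y_mixed s := (y_caps s).1.
rewrite bvalue1E; apply: (maxmin_le _ _ (revealed_bstrat t2 y_mixed)).
- by move=> s1 s2; apply: bexp01.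
- by exists (fun _ => pure R None) => T; apply: pure_mixed.
move=> s1 s1_strat; rewrite bexpE; apply: ler_sum => s _.
rewrite ler_wpM2l //; first by case: G_wf.
rewrite revealed_strategyE // payoff_rows.
apply: (mixed_avg_le (s1_strat (t1 s))) => a _; rewrite bpay_cols //.
by case: ifP => [T1a | _]; [apply: (y_caps s).2 | apply: v0].
Qed.

End BayesianGames.

Lemma enum_option_bool : index_enum (option bool) = [:: None; Some true; Some false].
Proof. by rewrite /index_enum !unlock /= /option_enum !unlock. Qed.

Lemma big_option_bool (T : Type) (idx : T) (op : T -> T -> T) (F : option bool -> T) :
  \big[op/idx]_s F s = op (F None) (op (F (Some true)) (op (F (Some false)) idx)).
Proof. by rewrite enum_option_bool !big_cons big_nil. Qed.

(* Scenarios, like actions, are encoded in [option bool]. *)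
Definition ex_weight (s : option bool) : nat := if s == Some true then 1 else 2.

Definition ex_Cw (s : option bool) : {set bool} :=
  match s with
  | None => finset.set0
  | Some true => [set true]
  | Some false => [set: bool]
  end.

Definition ex_Cl (s : option bool) : {set bool} :=
  match s with
  | None => [set: bool]
  | Some true => [set false]
  | Some false => [set true]
  end.

Lemma ex_Cw_inj : injective ex_Cw.
Proof.
by case=> [[]|] [[]|] // /setP E; move: (E true) (E false); rewrite !inE.
Qed.

Lemma ex_Cl_inj : injective ex_Cl.
Proof.
by case=> [[]|] [[]|] // /setP E; move: (E true) (E false); rewrite !inE.
Qed.

Lemma in_avail (A : finType) (X : {set A}) a : (a \in avail X) = avail X a.
Proof. by []. Qed.

Lemma ex_guarantee_sum_ge10 (B1 B2 : option bool -> option bool -> bool) :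
  (forall a b, B2 b a = ~~ B1 a b) ->
  (10 <= \sum_s ex_weight s *
     (best_guarantee B1 (avail (ex_Cl s)) (avail (ex_Cw s)) +
      best_guarantee B2 (avail (ex_Cl s)) (avail (ex_Cw s))))%N.
Proof.
move=> B21; have -> : B2 = fun b a => ~~ B1 a b by apply/funext => b; apply/funext.
rewrite /best_guarantee /guarantee !enum_option_bool unlock /= !in_avail /= ?inE /=.
move: (B1 None None) (B1 None (Some true)) (B1 None (Some false))
  (B1 (Some true) None) (B1 (Some true) (Some true)) (B1 (Some true) (Some false))
  (B1 (Some false) None) (B1 (Some false) (Some true)) (B1 (Some false) (Some false)).
by do 9! case.
Qed.

Section Example.
Variable R : realType.

Definition ex_P (s : option bool) : R := (ex_weight s)%:R / 5.

Definition ex_game : DDG R := @mkDDG R bool (option bool) ex_P ex_Cw ex_Cl.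

Lemma ex_game_wf : ddg_wf ex_game.
Proof.
split=> [s|]; first by rewrite /= /ex_P divr_ge0.
rewrite big_option_bool /= /ex_P /ex_weight /=; lra.
Qed.

Lemma ex_guarantee_bound (B1 B2 : option bool -> option bool -> bool) :
  (forall a b, B2 b a = ~~ B1 a b) ->
  1 / 2 <=
  (\sum_s ex_P s * ((best_guarantee B1 (avail (ex_Cl s)) (avail (ex_Cw s)))%:R / 2) +
   \sum_s ex_P s * ((best_guarantee B2 (avail (ex_Cl s)) (avail (ex_Cw s)))%:R / 2)) / 2.
Proof.
move=> /ex_guarantee_sum_ge10; rewrite -(ler_nat R) !big_option_bool /ex_P /ex_weight /=.
lra.
Qed.

Definition ex_judge (a b : option bool) : R :=
  match a, b with
  | Some true, None | Some true, Some false => 1 / 2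
  | Some false, Some true => 1
  | _, _ => 0
  end.

Definition ex_policy (i : 'I_2) (a b : option bool) : R :=
  if i == ag1 then ex_judge a b else 1 - ex_judge a b.

Lemma ex_policy01 i a b : 0 <= ex_policy i a b <= 1.
Proof.
by rewrite /ex_policy; case: (i == ag1); case: a => [[]|]; case: b => [[]|];
  rewrite /=; apply/andP; split; lra.
Qed.

Lemma ex_policy_is_policy : is_policy ex_policy.
Proof.
split=> [|a b]; first exact: ex_policy01.
by rewrite /ex_policy eqxx addrC subrK.
Qed.

Definition ex_cap1 (s : option bool) : R := if s is None then 1 / 2 else 0.

Definition ex_hold1 (s : option bool) : option bool -> R :=
  if s == Some false then pure R (Some true) else pure R None.

Definition ex_cap2 (s : option bool) : R :=
  match s with None => 1 | Some true => 1 / 2 | Some false => 2 / 3 end.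

Definition ex_hold2 (s : option bool) : option bool -> R :=
  match s with
  | None => pure R None
  | Some true => pure R (Some true)
  | Some false => mix2 (2 / 3) (Some true) (Some false)
  end.

Lemma ex_caps1 s :
  caps (ex_policy ag1) (avail (ex_Cl s)) (avail (ex_Cw s)) (ex_hold1 s) (ex_cap1 s).
Proof.
split; first by case: s => [[]|]; apply: pure_mixed; rewrite /= ?inE.
move=> a; rewrite /ex_hold1; case: s => [[]|] /=; rewrite sum_pure /ex_policy eqxx;
  by case: a => [[]|]; rewrite /= ?inE //= => _; lra.
Qed.

Lemma ex_caps2 s :
  caps (swap_agents ex_policy ag1) (avail (ex_Cl s)) (avail (ex_Cw s))
    (ex_hold2 s) (ex_cap2 s).
Proof.
split.
  case: s => [[]|]; rewrite /ex_hold2; try by apply: pure_mixed; rewrite /= ?inE.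
  by apply: mix2_mixed; rewrite /= ?inE //; apply/andP; split; lra.
move=> b; rewrite /swap_agents /ex_policy eqxx /=.
case: s => [[]|]; rewrite /ex_hold2 ?sum_mix2 ?sum_pure /= ?eqxx;
  by case: b => [[]|]; rewrite /= ?inE //= => _; lra.
Qed.

Lemma ex_cap_sum :
  (\sum_s ex_P s * ex_cap1 s + \sum_s ex_P s * ex_cap2 s) / 2 = 29 / 60.
Proof. rewrite !big_option_bool /ex_P /ex_weight /=; lra. Qed.

End Example.

Section ExampleErrors.
Variable R : realType.

Let P0 : forall s, 0 <= ex_P R s := (ex_game_wf R).1.

Lemma ex_ckddg_policy_error : @ckddg_error R (ex_game R) (ex_policy R) <= 29 / 60.
Proof.
rewrite ckddg_errorE -ex_cap_sum ler_pM2r ?invr_gt0 ?ltr0n //.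
apply: lerD; apply: ler_sum => s _; apply: (ler_wpM2l (P0 s)).
  exact: (value1_le (a0 := None) (ex_policy01 R ag1) isT (ex_caps1 R s)).
exact: (value1_le (a0 := None) (swap_agents01 (ex_policy01 R)) isT (ex_caps2 R s)).
Qed.

Lemma ex_piddg_policy_error : @piddg_error R (ex_game R) (ex_policy R) <= 29 / 60.
Proof.
rewrite piddg_errorE -ex_cap_sum ler_pM2r ?invr_gt0 ?ltr0n //.
apply: lerD.
  apply: (bvalue1_le (ex_game_wf R) (ex_policy01 R ag1) ex_Cw_inj (ex_caps1 R)).
  by case=> [[]|] /=; lra.
apply: (bvalue1_le (ex_game_wf R) (swap_agents01 (ex_policy01 R)) ex_Cw_inj (ex_caps2 R)).
by case=> [[]|] /=; lra.
Qed.

Lemma ex_ckddg_det_error M : is_det_policy M -> 1 / 2 <= @ckddg_error R (ex_game R) M.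
Proof.
move=> M_det; have M01 := M_det.1.1.
apply: le_trans (ex_guarantee_bound R (swap_agents_det_bits M_det)) _.
rewrite ckddg_errorE ler_pM2r ?invr_gt0 ?ltr0n //.
apply: lerD; apply: ler_sum => s _; apply: (ler_wpM2l (P0 s)).
  have [x x_sec] := det_policy_secures (X := avail (ex_Cl s)) (avail (ex_Cw s)) M_det isT.
  exact: (value1_ge (b0 := None) (M01 ag1) isT x_sec).
have [x x_sec] :=
  det_policy_secures (X := avail (ex_Cl s)) (avail (ex_Cw s)) (swap_agents_det M_det) isT.
exact: (value1_ge (b0 := None) (swap_agents01 M01) isT x_sec).
Qed.

Lemma ex_piddg_det_error M : is_det_policy M -> 1 / 2 <= @piddg_error R (ex_game R) M.
Proof.
move=> M_det; have M01 := M_det.1.1.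
have [x1 x1_sec] := choice (fun s =>
  det_policy_secures (X := avail (ex_Cl s)) (avail (ex_Cw s)) M_det isT).
have [x2 x2_sec] := choice (fun s =>
  det_policy_secures (X := avail (ex_Cl s)) (avail (ex_Cw s)) (swap_agents_det M_det) isT).
apply: le_trans (ex_guarantee_bound R (swap_agents_det_bits M_det)) _.
rewrite piddg_errorE ler_pM2r ?invr_gt0 ?ltr0n //; apply: lerD.
  apply: (bvalue1_ge (ex_game_wf R) (M01 ag1) ex_Cl_inj x1_sec) => s.
  exact: best_guarantee_half_le1.
apply: (bvalue1_ge (ex_game_wf R) (swap_agents01 M01) ex_Cl_inj x2_sec) => s.
exact: best_guarantee_half_le1.
Qed.

End ExampleErrors.

Theorem proposition3p6 (R : realType) :
  (exists G : CKDG R, ckdg_wf G /\ randomization_helps (@ckdg_error R G)) /\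
  (exists G : DDG R, ddg_wf G /\ randomization_helps (@ckddg_error R G)) /\
  (exists G : DDG R, ddg_wf G /\ randomization_helps (@piddg_error R G)).
Proof.
have gap : 29 / 60 < 1 / 2 :> R by lra.
have ck_helps : randomization_helps (@ckddg_error R (ex_game R)).
  exact: randomization_helps_gap (ex_policy_is_policy R) (ex_ckddg_policy_error R) gap
    (@ex_ckddg_det_error R).
have pi_helps : randomization_helps (@piddg_error R (ex_game R)).
  exact: randomization_helps_gap (ex_policy_is_policy R) (ex_piddg_policy_error R) gap
    (@ex_piddg_det_error R).
split; [|split]; [exists (induced_ckdg (ex_game R)) | exists (ex_game R) ..].
- by split; [apply/induced_ckdg_wf/ex_game_wf | exact: ck_helps].
- by split; [exact: ex_game_wf | exact: ck_helps].
- by split; [exact: ex_game_wf | exact: pi_helps].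
Qed.
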